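(* Let $m\ge n$ and $s,r$ be positive integers with $s\le m$ and $r\le n$, and let $A\in\mathbb{R}^{m\times n}$. For indeterminates $y,z$ define the $m\times n$ matrix \[ \tilde A(y,z)=\begin{pmatrix}yI_s&0\\0&I_{m-s}\end{pmatrix}A\begin{pmatrix}zI_r&0\\0&I_{n-r}\end{pmatrix} \] and $\theta_A(x,y,z)=\det\big(xI_n+\tilde A(y,z)^T\tilde A(y,z)\big)$. Then \[ \theta_A(x,y,z)=\sum_{j=0}^n\sum_{p=0}^s\sum_{q=0}^r x^{n-j}y^{2p}z^{2q}A^j_{p,q},\qquad A^j_{p,q}=\sum_{\substack{X\subseteq[m],\,Y\subseteq[n],\ |X|=|Y|=j\\ |X\cap[s]|=p,\ |Y\cap[r]|=q}}[A]_{X,Y}^2 . \]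
   Context: For a matrix $C$ and index sets $S,T$ with $|S|=|T|$, $[C]_{S,T}=\det(\{C_{ij}\}_{i\in S,j\in T})$ is the $(S,T)$-minor, with $[C]_{\varnothing,\varnothing}=1$. $[N]=\{1,\dots,N\}$. *)

From HB Require Import structures.
From mathcomp Require Import all_boot all_order all_algebra.
From mathcomp Require Import reals.
Set Implicit Arguments. Unset Strict Implicit. Unset Printing Implicit Defensive.
Import Order.TTheory GRing.Theory Num.Theory.
Local Open Scope ring_scope.

(* [C]_{X,Y}: determinant of the submatrix of rows X, columns Y, both taken in
   increasing order (enum of a set of ordinals is increasing). Meaningful when
   #|X| = #|Y| (the only case used). [C]_{set0,set0} = det of 0x0 matrix = 1. *)
Definition minor (R : comRingType) (m n : nat) (C : 'M[R]_(m, n))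
    (X : {set 'I_m}) (Y : {set 'I_n}) : R :=
  \det (\matrix_(i < #|X|, j < #|X|) nth 0 [seq C (enum_val i) y | y <- enum Y] j).

Definition blockdiag (R : comRingType) (k s : nat) (y : R) : 'M[R]_k :=
  diag_mx (\row_(i < k) (if (i < s)%N then y else 1)).

Definition Atilde (R : comRingType) (m n s r : nat) (A : 'M[R]_(m, n)) (y z : R)
  : 'M[R]_(m, n) :=
  blockdiag m s y *m A *m blockdiag n r z.

Definition thetaA (R : comRingType) (m n s r : nat) (A : 'M[R]_(m, n)) (x y z : R) : R :=
  \det (x%:M + (Atilde s r A y z)^T *m Atilde s r A y z).

Definition Acoef (R : comRingType) (m n s r : nat) (A : 'M[R]_(m, n)) (j p q : nat) : R :=
  \sum_(X : {set 'I_m} | (#|X| == j) && (#|[set i in X | (i < s)%N]| == p))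
   \sum_(Y : {set 'I_n} | (#|Y| == j) && (#|[set i in Y | (i < r)%N]| == q))
     minor A X Y ^+ 2.

(* Expanding [det (x I + B^T B)] row by row gives
   [sum_Y x^(n - |Y|) det ((B^T B)_(Y,Y))], and the principal submatrix
   [(B^T B)_(Y,Y)] is [C^T C] for the column submatrix [C = B_(-,Y)], so by
   Cauchy-Binet its determinant is [sum_(|X| = |Y|) [B]_(X,Y)^2].  For
   [B = diag (y I_s, I) A diag (z I_r, I)] the minor [[B]_(X,Y)] is
   [y^|X :&: [s]| z^|Y :&: [r]| [A]_(X,Y)]; it remains to group the terms
   by [|Y|], [|X :&: [s]|] and [|Y :&: [r]|]. *)

From HB Require Import structures.
From mathcomp Require Import all_boot all_order all_algebra.
From mathcomp Require Import reals.
From mathcomp Require Import fingroup perm.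
Set Implicit Arguments. Unset Strict Implicit. Unset Printing Implicit Defensive.
Import Order.TTheory GRing.Theory Num.Theory.
Local Open Scope ring_scope.

(* [d] is a junk default, never used when [#|X| = k]. *)
Definition enum_nth N (d : 'I_N) k (X : {set 'I_N}) (i : 'I_k) : 'I_N :=
  nth d (enum X) i.
Arguments enum_nth {N} d k X i.

Section EnumNth.
Variables (N : nat) (d : 'I_N) (k : nat) (X : {set 'I_N}).
Hypothesis cardX : #|X| = k.

Lemma codom_enum_nth : codom (enum_nth d k X) = enum X.
Proof.
apply: (@eq_from_nth _ d); first by rewrite size_codom card_ord -cardE cardX.
move=> i; rewrite size_codom card_ord => lt_ik.
rewrite codomE (nth_map (Ordinal lt_ik)) ?size_enum_ord //.
by rewrite -[i in nth _ (enum 'I_k) i]/(nat_of_ord (Ordinal lt_ik)) nth_ord_enum.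
Qed.

Lemma enum_nth_inj : injective (enum_nth d k X).
Proof.
by apply/injectiveP; rewrite /injectiveb /dinjectiveb -codomE codom_enum_nth enum_uniq.
Qed.

Lemma enum_nth_mem i : enum_nth d k X i \in X.
Proof. by rewrite -mem_enum -codom_enum_nth codom_f. Qed.

Lemma imset_enum_nth : [set enum_nth d k X i | i : 'I_k] = X.
Proof.
apply/setP => y; apply/imsetP/idP => [[i _ ->]|]; first exact: enum_nth_mem.
by rewrite -mem_enum -codom_enum_nth => /codomP[i ->]; exists i.
Qed.

End EnumNth.
Arguments enum_nth_inj {N} d {k X} cardX [x1 x2].

Lemma sorted_enum_ord n (A : {set 'I_n}) : sorted (relpre val ltn) (enum A).
Proof.
rewrite -sorted_map -[enum _](eq_filter (mem_enum _)).
rewrite -(eq_filter (mem_map val_inj _)) -filter_map.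
by rewrite (sorted_filter ltn_trans) // unlock val_ord_enum iota_ltn_sorted.
Qed.

Lemma enum_lift n (i : 'I_n.+1) (S : {set 'I_n.+1}) : i \notin S ->
  enum S = map (lift i) (enum [set j | lift i j \in S]).
Proof.
move=> iNS; apply: (irr_sorted_eq (leT := relpre val ltn)).
- by move=> a b c /=; apply: ltn_trans.
- by move=> a /=; rewrite ltnn.
- exact: sorted_enum_ord.
- rewrite sorted_map; apply: sub_sorted (sorted_enum_ord _) => a b /=.
  by rewrite !ltnNge leq_bump2.
move=> x; rewrite mem_enum; case: (unliftP i x) => [j ->|->].
  by rewrite (mem_map (@lift_inj _ i)) mem_enum inE.
by rewrite (negPf iNS); apply/esym/mapP => -[j _ /eqP]; rewrite eq_liftF.
Qed.

Section PrincipalMinors.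
Variable R : comNzRingType.

Definition scalar_outside n (S : {set 'I_n}) (x : R) (M : 'M[R]_n) : 'M[R]_n :=
  \matrix_(i, j) if i \in S then M i j else x *+ (i == j).

Lemma det_scalar_addmx_expand n (x : R) (M : 'M[R]_n) :
  \det (x%:M + M) = \sum_(S : {set 'I_n}) \det (scalar_outside S x M).
Proof.
transitivity (\sum_(s : 'S_n) \sum_(S : {set 'I_n}) (-1) ^+ s *
   \prod_i (if i \in S then M i (s i) else x *+ (i == s i))).
  apply: eq_bigr => s _; rewrite -big_distrr /=; congr (_ * _).
  rewrite -(bigA_distr 1 _ (fun i => M i (s i)) (fun i => x *+ (i == s i))).
  by apply: eq_bigr => i _; rewrite !mxE addrC.
rewrite exchange_big; apply: eq_bigr => S _; apply: eq_bigr => s _.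
by congr (_ * _); apply: eq_bigr => i _; rewrite !mxE.
Qed.

Lemma det_scalar_outside n (x : R) (M : 'M[R]_n) (S : {set 'I_n}) k (u : 'I_k -> 'I_n) :
  codom u = enum S -> \det (scalar_outside S x M) = x ^+ #|~: S| * \det (mxsub u u M).
Proof.
elim: n M S k u => [|n IHn] M S k u codom_u.
  case: k u codom_u => [|k] u _; last by case: (u ord0).
  by rewrite !det_mx00 (eq_card0 (A := ~: S)) ?expr0 ?mul1r // => -[].
have [i iNS | S_full] := pickP [pred i | i \notin S]; last first.
  have S_T : S = setT by apply/setP => i; rewrite inE; move/negbFE: (S_full i).
  have k_eq : k = n.+1.
    move/(congr1 size): codom_u.
    by rewrite size_codom card_ord -cardE S_T cardsT card_ord.
  subst S k; rewrite setCT cards0 expr0 mul1r; congr (\det _); apply/matrixP => a b.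
  have u_id j : u j = j.
    have := congr1 (fun s => nth j s j) codom_u.
    by rewrite codomE (nth_map j) ?size_enum_ord // enum_setT -enumT !nth_ord_enum.
  by rewrite !mxE inE !u_id.
(* Laplace expansion along a row [i] outside [S] peels off one factor [x]. *)
rewrite (expand_det_row _ i) (bigD1 i) //= big1 => [|j ji]; last first.
  by rewrite mxE (negPf iNS) eq_sym (negPf ji) mulr0n mul0r.
rewrite mxE (negPf iNS) eqxx mulr1n addr0 /cofactor addnn -signr_odd odd_double mul1r.
set S' := [set j | lift i j \in S].
have enumS := enum_lift iNS.
have /fin_all_exists[u' u_lift] j : exists j', u j = lift i j'.
  case: (unliftP i (u j)) => [j' ->|u_i]; first by exists j'.
  by have := codom_f u j; rewrite codom_u mem_enum u_i (negPf iNS).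
have codom_u' : codom u' = enum S'.
  apply: (inj_map (@lift_inj _ i)); rewrite -enumS -codom_u !codomE -map_comp.
  by apply: eq_map => j /=; rewrite u_lift.
have -> : row' i (col' i (scalar_outside S x M)) =
          scalar_outside S' x (row' i (col' i M)).
  by apply/matrixP => a b; rewrite !mxE inE (inj_eq (@lift_inj _ i)).
rewrite (IHn _ _ _ _ codom_u').
have -> : mxsub u' u' (row' i (col' i M)) = mxsub u u M.
  by apply/matrixP => a b; rewrite !mxE !u_lift.
have cardS : #|S| = #|S'| by rewrite !cardE enumS size_map.
have cardSC : #|~: S| = #|~: S'|.+1.
  by apply/eqP; rewrite -(eqn_add2l #|S|) cardsC cardS addnS cardsC !card_ord.
by rewrite cardSC exprS mulrA.
Qed.

Lemma det_scalar_addmx n (d : 'I_n) (x : R) (M : 'M[R]_n) :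
  \det (x%:M + M) = \sum_(S : {set 'I_n})
    x ^+ #|~: S| * \det (mxsub (enum_nth d #|S| S) (enum_nth d #|S| S) M).
Proof.
rewrite det_scalar_addmx_expand; apply: eq_bigr => S _.
exact/det_scalar_outside/codom_enum_nth.
Qed.

End PrincipalMinors.

Lemma big_imset_enum_nth_perm (R : Type) (idx : R) (op : Monoid.com_law idx)
    N (d : 'I_N) k (X : {set 'I_N}) (G : {ffun 'I_k -> 'I_N} -> R) : #|X| = k ->
  \big[op/idx]_(s : 'S_k) G [ffun i => enum_nth d k X (s i)] =
  \big[op/idx]_(g : {ffun 'I_k -> 'I_N} | [set g i | i : 'I_k] == X) G g.
Proof.
move=> cardX; set f := enum_nth d k X; have f_inj := enum_nth_inj d cardX.
rewrite -(big_imset _ (h := fun s : 'S_k => [ffun i => f (s i)])) /=; last first.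
  move=> s t _ _ /ffunP e; apply/permP => i.
  by apply: f_inj; have := e i; rewrite !ffunE.
apply: eq_bigl => g; apply/imsetP/eqP => [[s _ ->]|img_g].
  rewrite -(imset_enum_nth d cardX); apply/setP => y.
  apply/imsetP/imsetP => [[i _ ->]|[i _ ->]]; first by exists (s i); rewrite ?ffunE.
  by exists ((s^-1)%g i); rewrite // ffunE permKV.
have g_inj : injective g.
  have /imset_injP g_inj : #|[set g i | i : 'I_k]| == #|'I_k|.
    by rewrite img_g cardX card_ord.
  by move=> a b; apply: g_inj.
have /fin_all_exists[t f_t] i : exists j, f j = g i.
  have : g i \in X by rewrite -img_g imset_f.
  by rewrite -(imset_enum_nth d cardX) => /imsetP[j _ ->]; exists j.
have t_inj : injective t by move=> a b /(congr1 f); rewrite !f_t => /g_inj.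
by exists (perm t_inj) => //; apply/ffunP => i; rewrite ffunE permE f_t.
Qed.
Arguments big_imset_enum_nth_perm {R idx op N} d {k X} G cardX.

Section CauchyBinet.
Variable R : comNzRingType.

Lemma det_mulmx_rowsub k N (P : 'M[R]_(k, N)) (Q : 'M[R]_(N, k)) :
  \det (P *m Q) =
  \sum_(g : {ffun 'I_k -> 'I_N}) (\prod_i P i (g i)) * \det (rowsub g Q).
Proof.
transitivity (\sum_(s : 'S_k) (-1) ^+ s * \sum_(g : {ffun 'I_k -> 'I_N})
    \prod_i (P i (g i) * Q (g i) (s i))).
  apply: eq_bigr => s _; congr (_ * _).
  rewrite -(bigA_distr_bigA (fun i j => P i j * Q j (s i))).
  by apply: eq_bigr => i _; rewrite mxE.
under eq_bigr do rewrite big_distrr.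
rewrite exchange_big; apply: eq_bigr => g _ /=.
rewrite /(\det (rowsub g Q)) big_distrr; apply: eq_bigr => s _ /=.
rewrite big_split /= mulrCA; congr (_ * (_ * _)).
by apply: eq_bigr => i _; rewrite mxE.
Qed.

Theorem cauchy_binet k N (d : 'I_N) (P : 'M[R]_(k, N)) (Q : 'M[R]_(N, k)) :
  \det (P *m Q) = \sum_(X : {set 'I_N} | #|X| == k)
     \det (colsub (enum_nth d k X) P) * \det (rowsub (enum_nth d k X) Q).
Proof.
(* A non-injective [g] repeats a row of [rowsub g Q]; the injective [g] with
   image [X] are the [enum_nth d k X \o s] for the permutations [s] of ['I_k]. *)
rewrite det_mulmx_rowsub.
rewrite (partition_big (fun g : {ffun 'I_k -> 'I_N} => [set g i | i : 'I_k]) predT) //=.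
rewrite (bigID (fun X : {set 'I_N} => #|X| == k)) /= [X in _ + X]big1 ?addr0
  => [|X cardXNk].
  apply: eq_bigr => X /eqP cardX; rewrite -(big_imset_enum_nth_perm d _ cardX).
  rewrite /(\det (colsub _ P)) big_distrl; apply: eq_bigr => s _ /=.
  have -> : rowsub [ffun i => enum_nth d k X (s i)] Q =
            row_perm s (rowsub (enum_nth d k X) Q).
    by apply/matrixP => a b; rewrite !mxE ffunE.
  rewrite row_permE det_mulmx det_perm mulrA [_ * (-1) ^+ _]mulrC.
  by congr (_ * _ * _); apply: eq_bigr => i _; rewrite !mxE ffunE.
apply: big1 => g /eqP img_g.
have /injectivePn[i1 [i2 i12 g_i12]] : ~~ injectiveb g.
  by apply: contra cardXNk => /injectiveP g_inj; rewrite -img_g card_imset // card_ord.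
by rewrite (determinant_alternate i12) ?mulr0 // => j; rewrite !mxE g_i12.
Qed.

End CauchyBinet.

Section Minors.
Variables (R : comNzRingType) (m n : nat) (dm : 'I_m) (dn : 'I_n).
Implicit Types (A B : 'M[R]_(m, n)) (X : {set 'I_m}) (Y : {set 'I_n}).

Lemma minor_mxsub k A X Y : #|X| = k -> #|Y| = k ->
  minor A X Y = \det (mxsub (enum_nth dm k X) (enum_nth dn k Y) A).
Proof.
move=> <- cardY; congr (\det _); apply/matrixP => i j.
rewrite !mxE (nth_map dn) ?(enum_val_nth dm) // -cardE cardY ltn_ord //.
Qed.

Lemma principal_minor_gram B Y :
  \det (mxsub (enum_nth dn #|Y| Y) (enum_nth dn #|Y| Y) (B^T *m B)) =
  \sum_(X : {set 'I_m} | #|X| == #|Y|) minor B X Y ^+ 2.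
Proof.
rewrite mxsub_mul (cauchy_binet dm); apply: eq_bigr => X /eqP cardX.
rewrite (minor_mxsub B cardX (erefl _)) expr2 -[X in X * _]det_tr.
by congr (_ * _); congr (\det _); apply/matrixP => a b; rewrite !mxE.
Qed.

Lemma det_scalar_add_gram B (x : R) :
  \det (x%:M + B^T *m B) =
  \sum_(Y : {set 'I_n})
    x ^+ #|~: Y| * \sum_(X : {set 'I_m} | #|X| == #|Y|) minor B X Y ^+ 2.
Proof.
by rewrite (det_scalar_addmx dn); apply: eq_bigr => Y _; rewrite principal_minor_gram.
Qed.

Lemma minor_diag_mul (a : 'rV[R]_m) (b : 'rV[R]_n) A X Y : #|X| = #|Y| ->
  minor (diag_mx a *m A *m diag_mx b) X Y =
  (\prod_(i in X) a 0 i) * (\prod_(j in Y) b 0 j) * minor A X Y.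
Proof.
move=> cardXY; rewrite !(minor_mxsub _ cardXY (erefl _)).
set f := enum_nth dm #|Y| X; set g := enum_nth dn #|Y| Y.
have -> : mxsub f g (diag_mx a *m A *m diag_mx b) =
    diag_mx (\row_i a 0 (f i)) *m mxsub f g A *m diag_mx (\row_j b 0 (g j)).
  by apply/matrixP => i j; rewrite !mul_mx_diag !mul_diag_mx !mxE.
rewrite !det_mulmx !det_diag mulrAC; congr (_ * _ * _).
  rewrite -[in RHS](imset_enum_nth dm cardXY) big_imset /=; last first.
    by move=> i j _ _; apply: (enum_nth_inj dm cardXY).
  by apply: eq_bigr => i _; rewrite mxE.
rewrite -[in RHS](imset_enum_nth dn (erefl #|Y|)) big_imset /=; last first.
  by move=> i j _ _; apply: (enum_nth_inj dn (erefl #|Y|)).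
by apply: eq_bigr => i _; rewrite mxE.
Qed.

End Minors.

Lemma prodr_if1 (R : comPzSemiRingType) (T : finType) (A : {pred T}) (P : pred T)
    (y : R) :
  \prod_(i in A) (if P i then y else 1) = y ^+ #|[set i in A | P i]|.
Proof.
by rewrite -big_mkcondr prodr_const; congr (_ ^+ _); apply: eq_card => i; rewrite !inE.
Qed.

Lemma minor_Atilde (R : comNzRingType) m n (dm : 'I_m) (dn : 'I_n) s r
    (A : 'M[R]_(m, n)) (y z : R) (X : {set 'I_m}) (Y : {set 'I_n}) : #|X| = #|Y| ->
  minor (Atilde s r A y z) X Y =
  y ^+ #|[set i in X | (i < s)%N]| * z ^+ #|[set j in Y | (j < r)%N]| * minor A X Y.
Proof.
move=> cardXY; rewrite /Atilde /blockdiag (minor_diag_mul dm dn _ _ _ cardXY).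
by rewrite -!prodr_if1; congr (_ * _ * _); apply: eq_bigr => i _; rewrite mxE.
Qed.

Lemma card_set_ltn N (X : {set 'I_N}) c : (#|[set i in X | (i < c)%N]| <= c)%N.
Proof.
rewrite cardE -(size_map val) -[c in (_ <= c)%N](size_iota 0).
apply: uniq_leq_size; first by rewrite map_inj_uniq ?enum_uniq //; exact: val_inj.
by move=> a /mapP [i]; rewrite mem_enum inE => /andP [_ lt_ic] ->; rewrite mem_iota.
Qed.

Lemma big_ord_partition (R : Type) (idx : R) (op : Monoid.com_law idx)
    (T : finType) (P : pred T) (f : T -> nat) (b : nat) (F : T -> R) :
  (forall t, P t -> (f t <= b)%N) ->
  \big[op/idx]_(q < b.+1) \big[op/idx]_(t | P t && (f t == q)) F t =
  \big[op/idx]_(t | P t) F t.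
Proof.
move=> f_le; rewrite [RHS](partition_big (fun t => inord (f t) : 'I_b.+1) predT) //=.
apply: eq_bigr => q _; apply: eq_bigl => t.
by case Pt: (P t); rewrite //= -val_eqE /= inordK // ltnS f_le.
Qed.
Arguments big_ord_partition {R idx op T} P f b {F}.

Lemma sum_split_card (R : nmodType) m n s r (F : {set 'I_m} -> {set 'I_n} -> R) :
  \sum_(j < n.+1) \sum_(p < s.+1) \sum_(q < r.+1)
    \sum_(X : {set 'I_m} | (#|X| == j) && (#|[set i in X | (i < s)%N]| == p))
    \sum_(Y : {set 'I_n} | (#|Y| == j) && (#|[set i in Y | (i < r)%N]| == q)) F X Y =
  \sum_(Y : {set 'I_n}) \sum_(X : {set 'I_m} | #|X| == #|Y|) F X Y.
Proof.
transitivity (\sum_(j < n.+1) \sum_(X : {set 'I_m} | #|X| == j)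
    \sum_(Y : {set 'I_n} | #|Y| == j) F X Y).
  apply: eq_bigr => j _.
  rewrite -(big_ord_partition _ (fun X : {set 'I_m} => #|[set i in X | (i < s)%N]|) s)
    => [|X _]; last exact: card_set_ltn.
  apply: eq_bigr => p _; rewrite exchange_big; apply: eq_bigr => X _.
  by apply: big_ord_partition => Y _; apply: card_set_ltn.
rewrite -(big_ord_partition predT (fun Y : {set 'I_n} => #|Y|) n) => [|Y _]; last first.
  by rewrite -[X in (_ <= X)%N](card_ord n) max_card.
apply: eq_bigr => j _; rewrite exchange_big; apply: eq_bigr => Y /eqP cardY.
by apply: eq_bigl => X; rewrite cardY.
Qed.

Lemma thetaA_sum_minors (R : comNzRingType) m n (dm : 'I_m) (dn : 'I_n) s r
    (A : 'M[R]_(m, n)) (x y z : R) :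
  thetaA s r A x y z =
  \sum_(Y : {set 'I_n}) \sum_(X : {set 'I_m} | #|X| == #|Y|)
    x ^+ (n - #|Y|) * y ^+ (2 * #|[set i in X | (i < s)%N]|) *
    z ^+ (2 * #|[set j in Y | (j < r)%N]|) * minor A X Y ^+ 2.
Proof.
rewrite /thetaA (det_scalar_add_gram dm dn); apply: eq_bigr => Y _.
rewrite big_distrr; apply: eq_bigr => X /eqP cardXY.
rewrite (minor_Atilde dm dn _ _ _ _ _ cardXY) cardsCs setCK card_ord.
by rewrite /= !exprMn -!exprM ![(_ * 2)%N]mulnC !mulrA.
Qed.

Theorem mainTheorem6 (R : realType) (m n s r : nat) (A : 'M[R]_(m, n))
    (hnm : (n <= m)%N) (hs0 : (0 < s)%N) (hsm : (s <= m)%N)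
    (hr0 : (0 < r)%N) (hrn : (r <= n)%N) :
  forall x y z : R,
    thetaA s r A x y z =
    \sum_(j < n.+1) \sum_(p < s.+1) \sum_(q < r.+1)
      x ^+ (n - j) * y ^+ (2 * p) * z ^+ (2 * q) * Acoef s r A j p q.
Proof.
(* [hnm] is not needed; [hs0] and [hr0] only provide the default indices. *)
move=> x y z.
have dm : 'I_m := Ordinal (leq_trans hs0 hsm).
have dn : 'I_n := Ordinal (leq_trans hr0 hrn).
rewrite (thetaA_sum_minors dm dn); symmetry.
apply: etrans (sum_split_card s r _).
apply: eq_bigr => j _; apply: eq_bigr => p _; apply: eq_bigr => q _.
rewrite /Acoef big_distrr; apply: eq_bigr => X /andP[/eqP cardX /eqP cardXs].
rewrite big_distrr; apply: eq_bigr => Y /andP[/eqP cardY /eqP cardYr].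
by rewrite cardY cardXs cardYr.
Qed.
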